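(* Let $l^\top\ge 1$ be an integer, $\varepsilon>0$, $\theta\in\mathbb{R}$, and $\beta=|\mathcal{I}|+1$. Consider datasets in which every sequence has length at most $l^\top$. Then the modified PrivTree for PSTs (described below) with $\lambda\ge\frac{2\beta-1}{\beta-1}\cdot\frac{l^\top}{\varepsilon}$ and $\delta=\lambda\ln\beta$ satisfies $\varepsilon$-differential privacy, where two datasets are neighboring if one is obtained from the other by inserting a single sequence of length at most $l^\top$.
   Context: $\mathrm{Lap}(\lambda)$ is the Laplace distribution with density $\frac{1}{2\lambda}e^{-|y|/\lambda}$. $\mathcal{I}$ is a finite alphabet and $\$,\&$ are special symbols not in $\mathcal{I}$. A sequence is a string $s=\$x_1\cdots x_l$ with each $x_i\in\mathcal{I}\cup\{\&\}$, where $\&$ may occur only as the last symbol; its length is $l$. A dataset is a finite multiset of sequences. A PST node is a string $w$ over $\mathcal{I}\cup\{\$\}$ in which $\$$ can occur only as the first symbol; the root is the empty string; if $w$ does not start with $\$$ its children are $yw$ for $y\in\mathcal{I}\cup\{\$\}$; $\mathrm{depth}(w)$ is the length of $w$. For $x\in\mathcal{I}\cup\{\&\}$, $\mathrm{hist}(w)[x]$ is the total over sequences $\$x_1\cdots x_l$ in $D$ of the number of positions $i\in[1,l]$ with $x_i=x$ such that $w$ is a suffix of $\$x_1\cdots x_{i-1}$. The score is $c(w)=\sum_{x}\mathrm{hist}(w)[x]-\max_{x}\mathrm{hist}(w)[x]$ (over $x\in\mathcal{I}\cup\{\&\}$). Modified PrivTree$(D,\lambda,\theta,\delta)$: start with the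 tree containing only the root, unvisited. While some node $w$ is unvisited: mark it visited; if $w$ starts with $\$$, it is not split; otherwise set $b(w)=\max\{\theta-\delta,\ c(w)-\mathrm{depth}(w)\delta\}$, $\hat b(w)=b(w)+\eta_w$ with $\eta_w\sim\mathrm{Lap}(\lambda)$ fresh and independent, and if $\hat b(w)>\theta$ add all $|\mathcal{I}|+1$ children of $w$ as unvisited nodes. Output: the tree of nodes (strings) only, with all scores and histograms removed. An algorithm $\mathcal{A}$ is $\varepsilon$-differentially private if for all neighboring $D,D'$ and all outputs $O$, $\ln\big(\Pr[\mathcal{A}(D)=O]/\Pr[\mathcal{A}(D')=O]\big)\le\varepsilon$. *)

From Stdlib Require Import Reals List Permutation ClassicalEpsilon Bool.
Import ListNotations.
Open Scope R_scope.

Section PST.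
Variable I : Type.
Variable eqI : forall a b : I, {a = b} + {a <> b}.
Variable enumI : list I.

Definition alphabet_ok : Prop := NoDup enumI /\ forall a : I, In a enumI.

Definition beta : nat := S (length enumI).

(* A sequence  $ x_1 ... x_l : body = the symbols of I, term = true iff the
   sequence ends with the terminal symbol & (which may only occur last). *)
Record sequence := mkSeq { body : list I; term : bool }.

Definition seq_length (s : sequence) : nat :=
  (length (body s) + (if term s then 1 else 0))%nat.

(* A dataset is a finite multiset of sequences, represented by a list. *)
Definition dataset := list sequence.

(* A PST node: the string  nstr  (left to right), preceded by $ iff ndollar. *)
Record node := mkNode { nstr : list I; ndollar : bool }.

Definition node_eq_dec : forall v w : node, {v = w} + {v <> w}.
Proof.
  decide equality; [ apply Bool.bool_dec | apply (list_eq_dec eqI) ].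
Defined.

Definition root : node := mkNode [] false.

Definition depth (w : node) : nat :=
  (length (nstr w) + (if ndollar w then 1 else 0))%nat.

(* children yw, y in I ∪ {$}, of a node w not starting with $ *)
Definition children (w : node) : list node :=
  map (fun a => mkNode (a :: nstr w) false) enumI ++ [mkNode (nstr w) true].

Definition parent (w : node) : option node :=
  if ndollar w then Some (mkNode (nstr w) false)
  else match nstr w with [] => None | _ :: u => Some (mkNode u false) end.

(* Symbols x in I ∪ {&}: Some a for a in I, None for &. *)
Definition sym_eqb (x y : option I) : bool :=
  match x, y with
  | Some a, Some b => if eqI a b then true else false
  | None, None => true
  | _, _ => false
  end.

Definition symbols : list (option I) := None :: map Some enumI.

Definition suffixb (u p : list I) : bool :=
  (Nat.leb (length u) (length p) && 
  (if list_eq_dec eqI u (skipn (length p - length u) p) then true else false))%bool.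

(* is w a suffix of the string  $ p ? *)
Definition ctx_match (w : node) (p : list I) : bool :=
  if ndollar w then (if list_eq_dec eqI (nstr w) p then true else false)
  else suffixb (nstr w) p.

(* positions i in [1,l] of a sequence, as pairs (x_i, x_1 ... x_{i-1}) *)
Fixpoint pos_aux (pre : list I) (b : list I) : list (option I * list I) :=
  match b with
  | [] => []
  | a :: b' => (Some a, pre) :: pos_aux (pre ++ [a]) b'
  end.

Definition positions (s : sequence) : list (option I * list I) :=
  pos_aux [] (body s) ++ (if term s then [(None, body s)] else []).

Definition hist (D : dataset) (w : node) (x : option I) : nat :=
  fold_right Nat.add 0%nat
    (map (fun s => length (filter (fun pr => (sym_eqb (fst pr) x && ctx_match w (snd pr))%bool)
                                  (positions s))) D).

Definition score (D : dataset) (w : node) : nat :=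
  (fold_right Nat.add 0%nat (map (hist D w) symbols)
   - fold_right Nat.max 0%nat (map (hist D w) symbols))%nat.

(* Pr[ eta > t ] for eta ~ Lap(lam), lam > 0 *)
Definition lap_gt (lam t : R) : R :=
  if Rlt_dec t 0 then 1 - / 2 * exp (t / lam) else / 2 * exp (- t / lam).

Definition bval (D : dataset) (theta delta : R) (w : node) : R :=
  Rmax (theta - delta) (INR (score D w) - INR (depth w) * delta).

(* probability that w is split: Pr[ b(w) + eta_w > theta ] *)
Definition p_split (D : dataset) (lam theta delta : R) (w : node) : R :=
  lap_gt lam (theta - bval D theta delta w).

(* A finite set of nodes (given by a duplicate-free list) that is a possible
   output tree of the algorithm. *)
Definition valid_tree (O : list node) : Prop :=
  NoDup O /\ In root O /\
  (forall w p, In w O -> parent w = Some p -> In p O) /\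
  (forall w, In w O -> ndollar w = false ->
     (forall c, In c (children w) -> In c O) \/
     (forall c, In c (children w) -> ~ In c O)).

(* contribution of the (independent) noisy split decision taken at node w *)
Definition node_factor (D : dataset) (lam theta delta : R) (O : list node)
  (w : node) : R :=
  if ndollar w then 1
  else if in_dec node_eq_dec (mkNode (nstr w) true) O
       then p_split D lam theta delta w
       else 1 - p_split D lam theta delta w.

(* Pr[ PrivTree(D, lam, theta, delta) = O ] *)
Definition privtree_prob (D : dataset) (lam theta delta : R) (O : list node) : R :=
  if excluded_middle_informative (valid_tree O)
  then fold_right Rmult 1 (map (node_factor D lam theta delta O) O)
  else 0.

Definition neighboring (ltop : nat) (D D' : dataset) : Prop :=
  (exists s, (seq_length s <= ltop)%nat /\ Permutation D' (s :: D)) \/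
  (exists s, (seq_length s <= ltop)%nat /\ Permutation D (s :: D')).

Definition bounded_dataset (ltop : nat) (D : dataset) : Prop :=
  forall s, In s D -> (seq_length s <= ltop)%nat.

End PST.

Arguments mkSeq {I}.
Arguments mkNode {I}.

From Pilot Require Import Defs.
From Coquelicot Require Import Coquelicot.
From Stdlib Require Import Reals Arith List Permutation Lra Lia Bool ClassicalEpsilon.
Import ListNotations.
Open Scope R_scope.

(* The output probability is a product, over the nodes of the tree, of independent
   split / no-split factors, each a function of the node's bias [b(w)].  Inserting a
   sequence of length at most [ltop] inserts at most [ltop] occurrences [(x, p)] of a
   symbol [x] with context [p], and each occurrence raises by at most one the scores of
   the nodes whose context is a suffix of [$p], leaving the other scores unchanged.

   A split factor [Pr[b + Lap(lam) > theta]] grows by at most the exponential of the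
   increase of a potential whose derivative is [1/lam] below [theta] and decays like
   [exp ((theta - b)/lam) / lam] above it.  Along the path of suffixes of [p] the biases
   [c(w) - depth(w) delta] are [delta]-separated, so averaging over shifts in [[0, 1]]
   bounds the total increase by [1/lam] plus a geometric series of ratio
   [exp (- delta / lam) = 1 / beta], i.e. by [(2 beta - 1) / ((beta - 1) lam)].
   A no-split factor grows by at most [exp (1/lam)], and on that path only the deepest
   node of the tree can be a leaf.  Each occurrence thus costs at most
   [(2 beta - 1) / ((beta - 1) lam) <= eps / ltop] in either direction. *)

Lemma exp_le_exp x y : x <= y -> exp x <= exp y.
Proof. intros [Hlt | ->]; [left; now apply exp_increasing | apply Rle_refl]. Qed.

Lemma exp_le_1 x : x <= 0 -> exp x <= 1.
Proof. intros H. rewrite <- exp_0. now apply exp_le_exp. Qed.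

Lemma exp_mul_eq a b c : a + b = c -> exp a * exp b = exp c.
Proof. intros <-. now rewrite exp_plus. Qed.

Lemma geometric_sum_le q n : 0 <= q < 1 -> sum_f_R0 (fun i => q ^ i) n <= / (1 - q).
Proof.
  intros Hq. rewrite tech3 by lra. unfold Rdiv. rewrite <- (Rmult_1_l (/ (1 - q))) at 2.
  apply Rmult_le_compat_r.
  - left. apply Rinv_0_lt_compat. lra.
  - pose proof (pow_le q (S n) (proj1 Hq)). lra.
Qed.

Lemma is_RInt_const_R (a b c : R) : is_RInt (fun _ => c) a b ((b - a) * c).
Proof. exact (is_RInt_const (V := R_NormedModule) a b c). Qed.

Section LaplaceTail.
Variables lam theta : R.
Hypothesis lam_pos : 0 < lam.

Lemma Rdiv_le_compat_r x y : x <= y -> x / lam <= y / lam.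
Proof.
  intros H. apply Rmult_le_compat_r; [left; now apply Rinv_0_lt_compat | exact H].
Qed.

Lemma exp_div_le_1 x : x <= 0 -> exp (x / lam) <= 1.
Proof. intros H. apply exp_le_1. rewrite <- (Rdiv_0_l lam). now apply Rdiv_le_compat_r. Qed.

Definition split_prob (b : R) : R := lap_gt lam (theta - b).

Lemma split_prob_le_theta b : b <= theta -> split_prob b = / 2 * exp ((b - theta) / lam).
Proof.
  intros H. unfold split_prob, lap_gt.
  destruct (Rlt_dec (theta - b) 0); [lra |]. do 3 f_equal. ring.
Qed.

Lemma split_prob_gt_theta b : theta < b -> split_prob b = 1 - / 2 * exp ((theta - b) / lam).
Proof.
  intros H. unfold split_prob, lap_gt. now destruct (Rlt_dec (theta - b) 0); [| lra].
Qed.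

Lemma split_prob_bounds b : 0 < split_prob b < 1.
Proof.
  destruct (Rle_dec b theta) as [Hb | Hb].
  - rewrite split_prob_le_theta by exact Hb.
    pose proof (exp_pos ((b - theta) / lam)). pose proof (exp_div_le_1 (b - theta)). lra.
  - rewrite split_prob_gt_theta by lra.
    pose proof (exp_pos ((theta - b) / lam)). pose proof (exp_div_le_1 (theta - b)). lra.
Qed.

Lemma split_prob_monotone x y : x <= y -> split_prob x <= split_prob y.
Proof.
  intros Hxy. destruct (Rle_dec y theta) as [Hy | Hy].
  - rewrite !split_prob_le_theta by lra.
    pose proof (exp_le_exp _ _ (Rdiv_le_compat_r (x - theta) (y - theta) ltac:(lra))). lra.
  - rewrite (split_prob_gt_theta y) by lra. destruct (Rle_dec x theta) as [Hx | Hx].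
    + rewrite split_prob_le_theta by exact Hx.
      pose proof (exp_div_le_1 (x - theta)). pose proof (exp_div_le_1 (theta - y)). lra.
    + rewrite split_prob_gt_theta by lra.
      pose proof (exp_le_exp _ _ (Rdiv_le_compat_r (theta - y) (theta - x) ltac:(lra))). lra.
Qed.

(* An antiderivative of an upper bound on [(ln split_prob)']: the bound is [1/lam]
   below [theta] and [exp ((theta - b)/lam) / lam] above, where [split_prob >= 1/2]. *)
Definition split_potential (b : R) : R :=
  if Rle_dec b theta then b / lam else theta / lam + 1 - exp ((theta - b) / lam).

Lemma split_potential_ge_theta b :
  theta <= b -> split_potential b = theta / lam + 1 - exp ((theta - b) / lam).
Proof.
  intros H. unfold split_potential. destruct (Rle_dec b theta); [| reflexivity].
  replace b with theta by lra. unfold Rminus. rewrite Rplus_opp_r, Rdiv_0_l, exp_0. ring.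
Qed.

Lemma split_potential_monotone x y : x <= y -> split_potential x <= split_potential y.
Proof.
  intros Hxy. destruct (Rle_dec y theta) as [Hy | Hy].
  - unfold split_potential. do 2 destruct Rle_dec; try lra. now apply Rdiv_le_compat_r.
  - rewrite (split_potential_ge_theta y) by lra. pose proof (exp_div_le_1 (theta - y)).
    destruct (Rle_dec x theta) as [Hx | Hx].
    + unfold split_potential. destruct Rle_dec; [| lra].
      pose proof (Rdiv_le_compat_r x theta Hx). lra.
    + rewrite split_potential_ge_theta by lra.
      pose proof (exp_le_exp _ _ (Rdiv_le_compat_r (theta - y) (theta - x) ltac:(lra))). lra.
Qed.

Lemma split_prob_ratio x y :
  x <= y -> split_prob y <= exp (split_potential y - split_potential x) * split_prob x.
Proof.
  intros Hxy. destruct (Rle_dec y theta) as [Hy | Hy].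
  - rewrite !split_prob_le_theta by lra. unfold split_potential.
    do 2 destruct Rle_dec; try lra.
    assert (exp (y / lam - x / lam) * exp ((x - theta) / lam) = exp ((y - theta) / lam))
      by (apply exp_mul_eq; field; lra).
    lra.
  - rewrite (split_prob_gt_theta y), (split_potential_ge_theta y) by lra.
    set (z := exp ((theta - y) / lam)).
    assert (Hz : 0 < z <= 1) by (split; [apply exp_pos | apply exp_div_le_1; lra]).
    destruct (Rle_dec x theta) as [Hx | Hx].
    + rewrite split_prob_le_theta by exact Hx. unfold split_potential.
      destruct Rle_dec; [| lra].
      assert (exp (theta / lam + 1 - z - x / lam) * exp ((x - theta) / lam) = exp (1 - z))
        by (apply exp_mul_eq; field; lra).
      pose proof (exp_ineq1_le (1 - z)). lra.
    + rewrite split_prob_gt_theta, (split_potential_ge_theta x) by lra.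
      set (w := exp ((theta - x) / lam)).
      assert (Hw : z <= w <= 1).
      { split; [apply exp_le_exp, Rdiv_le_compat_r | apply exp_div_le_1]; lra. }
      replace (theta / lam + 1 - z - (theta / lam + 1 - w)) with (w - z) by ring.
      (* [(1 + w - z) (1 - w/2) - (1 - z/2) = (w - z)(1 - w)/2] *)
      pose proof (exp_ineq1_le (w - z)). nra.
Qed.

Lemma nosplit_prob_ratio x y :
  x <= y -> 1 - split_prob x <= exp ((y - x) / lam) * (1 - split_prob y).
Proof.
  intros Hxy. set (v := exp ((y - x) / lam)).
  destruct (Rle_dec y theta) as [Hy | Hy].
  - rewrite !split_prob_le_theta by lra.
    set (w := exp ((x - theta) / lam)). set (u := exp ((y - theta) / lam)).
    assert (Hu : v * w = u) by (apply exp_mul_eq; field; lra).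
    assert (0 < w <= u) by (split; [apply exp_pos | apply exp_le_exp, Rdiv_le_compat_r; lra]).
    assert (u <= 1) by (apply exp_div_le_1; lra).
    assert (E : (v * (1 - / 2 * u) - (1 - / 2 * w)) * w = (u - w) * (1 - (u + w) / 2))
      by (rewrite <- Hu; field).
    assert (0 <= (v * (1 - / 2 * u) - (1 - / 2 * w)) * w) by (rewrite E; nra).
    nra.
  - rewrite (split_prob_gt_theta y) by lra.
    assert (Hv : v * exp ((theta - y) / lam) = exp ((theta - x) / lam))
      by (apply exp_mul_eq; field; lra).
    destruct (Rle_dec x theta) as [Hx | Hx].
    + rewrite split_prob_le_theta by exact Hx.
      set (w := exp ((x - theta) / lam)).
      assert (Hw : exp ((theta - x) / lam) * w = 1).
      { rewrite <- exp_0. apply exp_mul_eq. field. lra. }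
      set (e := exp ((theta - x) / lam)) in *.
      replace (v * (1 - (1 - / 2 * exp ((theta - y) / lam)))) with (/ 2 * e)
        by (rewrite <- Hv; ring).
      assert (0 < w) by apply exp_pos.
      assert (E : w * (/ 2 * e - (1 - / 2 * w)) = (1 - w) ^ 2 / 2)
        by (rewrite Rmult_minus_distr_l, (Rmult_comm w (/ 2 * e)), Rmult_assoc, Hw; field).
      apply (Rmult_le_reg_l w); [lra |].
      assert (0 <= (1 - w) ^ 2) by apply pow2_ge_0. lra.
    + rewrite split_prob_gt_theta by lra. lra.
Qed.

Section ClippedPotential.
Variable delta : R.
Hypothesis delta_pos : 0 < delta.

(* [b(w) = max (theta - delta) (c(w) - depth(w) delta)] never drops below this. *)
Definition bias_floor : R := theta - delta.

Definition clipped_potential (t : R) : R := split_potential (Rmax bias_floor t).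

Definition potential_density (t : R) : R :=
  if Rle_dec bias_floor t then
    if Rle_dec t theta then / lam else exp ((theta - t) / lam) / lam
  else 0.

Lemma is_RInt_density_below_floor x y :
  x <= bias_floor -> y <= bias_floor ->
  is_RInt potential_density x y (clipped_potential y - clipped_potential x).
Proof.
  intros Hx Hy. unfold clipped_potential. rewrite !Rmax_left by lra.
  replace (_ - _) with ((y - x) * 0) by ring.
  apply (is_RInt_ext (fun _ => 0)); [| apply is_RInt_const_R].
  intros t [_ Ht]. unfold potential_density. destruct Rle_dec; [| reflexivity].
  exfalso. unfold Rmax in Ht. destruct Rle_dec in Ht; lra.
Qed.

Lemma is_RInt_density_below_theta x y :
  bias_floor <= x <= theta -> bias_floor <= y <= theta ->
  is_RInt potential_density x y (clipped_potential y - clipped_potential x).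
Proof.
  intros Hx Hy. unfold clipped_potential, split_potential. rewrite !Rmax_right by lra.
  do 2 destruct Rle_dec; try lra.
  replace (_ - _) with ((y - x) * / lam) by (field; lra).
  apply (is_RInt_ext (fun _ => / lam)); [| apply is_RInt_const_R].
  intros t [Ht1 Ht2]. unfold potential_density.
  destruct (Rle_dec bias_floor t), (Rle_dec t theta); try reflexivity;
    unfold Rmin, Rmax in *; destruct (Rle_dec x y); lra.
Qed.

Lemma is_RInt_density_above_theta x y :
  theta <= x -> theta <= y ->
  is_RInt potential_density x y (clipped_potential y - clipped_potential x).
Proof.
  intros Hx Hy. unfold clipped_potential. unfold bias_floor.
  rewrite !Rmax_right, !split_potential_ge_theta by lra.
  set (F := fun t => theta / lam + 1 - exp ((theta - t) / lam)).
  set (dF := fun t => exp ((theta - t) / lam) / lam).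
  change (is_RInt potential_density x y (minus (F y) (F x))).
  apply (is_RInt_ext dF).
  - intros t [Ht _]. unfold potential_density, bias_floor, dF.
    assert (theta < t) by (unfold Rmin in Ht; destruct Rle_dec in Ht; lra).
    destruct (Rle_dec (theta - delta) t), (Rle_dec t theta); lra.
  - apply (is_RInt_derive (V := R_CompleteNormedModule)).
    + intros t _. unfold F, dF. auto_derive; [exact I |]. unfold Rminus, Rdiv; ring.
    + intros t _. apply (ex_derive_continuous (K := R_AbsRing) (V := R_NormedModule)).
      unfold dF. auto_derive. lra.
Qed.

Lemma is_RInt_density_to_floor x :
  is_RInt potential_density x bias_floor (clipped_potential bias_floor - clipped_potential x).
Proof.
  assert (Hfloor : bias_floor <= theta) by (unfold bias_floor; lra).
  destruct (Rle_dec x bias_floor) as [Hx | Hx]; [now apply is_RInt_density_below_floor |].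
  destruct (Rle_dec x theta) as [Hx' | Hx']; [apply is_RInt_density_below_theta; lra |].
  replace (_ - _) with ((clipped_potential theta - clipped_potential x)
                         + (clipped_potential bias_floor - clipped_potential theta)) by ring.
  apply (is_RInt_Chasles (V := R_NormedModule)) with theta.
  - apply is_RInt_density_above_theta; lra.
  - apply is_RInt_density_below_theta; lra.
Qed.

Lemma is_RInt_potential_density x y :
  is_RInt potential_density x y (clipped_potential y - clipped_potential x).
Proof.
  replace (_ - _) with ((clipped_potential bias_floor - clipped_potential x)
                         + - (clipped_potential bias_floor - clipped_potential y)) by ring.
  apply (is_RInt_Chasles (V := R_NormedModule)) with bias_floor;
    [| apply (is_RInt_swap (V := R_NormedModule))]; apply is_RInt_density_to_floor.
Qed.

Definition potential_jump (u : R) : R := clipped_potential (u + 1) - clipped_potential u.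

Lemma potential_jump_ge0 u : 0 <= potential_jump u.
Proof.
  unfold potential_jump, clipped_potential.
  enough (split_potential (Rmax bias_floor u) <= split_potential (Rmax bias_floor (u + 1)))
    by lra.
  apply split_potential_monotone. unfold Rmax. do 2 destruct Rle_dec; lra.
Qed.

Lemma is_RInt_potential_jump u :
  is_RInt (fun s => potential_density (u + s)) 0 1 (potential_jump u).
Proof.
  pose proof (is_RInt_potential_density (1 * 0 + u) (1 * 1 + u)) as H.
  apply (is_RInt_comp_lin (V := R_NormedModule)) in H.
  replace (potential_jump u) with (clipped_potential (1 * 1 + u) - clipped_potential (1 * 0 + u))
    by (unfold potential_jump; f_equal; f_equal; ring).
  eapply is_RInt_ext; [| exact H]. intros s _.
  cbv beta.
  change (scal 1 (potential_density (1 * s + u))) with (1 * potential_density (1 * s + u)).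
  rewrite Rmult_1_l. f_equal. ring.
Qed.

Lemma is_RInt_sum_potential_jump (U : nat -> R) n :
  is_RInt (fun s => sum_f_R0 (fun d => potential_density (U d + s)) n) 0 1
          (sum_f_R0 (fun d => potential_jump (U d)) n).
Proof.
  induction n as [| n IH]; [apply is_RInt_potential_jump |].
  exact (is_RInt_plus (V := R_NormedModule) _ _ _ _ _ _ IH (is_RInt_potential_jump (U (S n)))).
Qed.

Lemma potential_density_nonneg t : 0 <= potential_density t.
Proof.
  assert (0 < / lam) by (apply Rinv_0_lt_compat; lra).
  pose proof (exp_pos ((theta - t) / lam)).
  unfold potential_density. destruct Rle_dec; [destruct Rle_dec |]; try lra.
  unfold Rdiv. nra.
Qed.

Lemma potential_density_below_floor t : t < bias_floor -> potential_density t = 0.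
Proof. intros H. unfold potential_density. now destruct Rle_dec; [lra |]. Qed.

Lemma potential_density_antitone x y :
  bias_floor <= x -> x <= y -> potential_density y <= potential_density x.
Proof.
  intros Hx Hxy. unfold potential_density.
  destruct (Rle_dec bias_floor x); [| lra]. destruct (Rle_dec bias_floor y); [| lra].
  assert (0 < / lam) by (apply Rinv_0_lt_compat; lra).
  destruct (Rle_dec y theta), (Rle_dec x theta); try lra.
  - pose proof (exp_div_le_1 (theta - y) ltac:(lra)). unfold Rdiv at 2. nra.
  - apply Rmult_le_compat_r; [lra |]. apply exp_le_exp, Rdiv_le_compat_r. lra.
Qed.

(* The shape of the biases [c(w_d) - d delta] of the nodes [w_d] of depth [d]
   along a path of nested contexts, whose scores [c(w_d)] do not increase with [d]. *)
Definition separated (U : nat -> R) (n : nat) : Prop :=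
  forall d d', (d <= d')%nat -> (d' <= n)%nat -> U d' + (INR d' - INR d) * delta <= U d.

Lemma density_sum_le_lattice (U : nat -> R) n : separated U n -> bias_floor <= U n ->
  sum_f_R0 (fun d => potential_density (U d)) n
  <= sum_f_R0 (fun k => potential_density (bias_floor + INR k * delta)) n.
Proof.
  revert U. induction n as [| n IH]; intros U HU Hn.
  - simpl. apply potential_density_antitone; lra.
  - rewrite decomp_sum by lia. cbn [Init.Nat.pred sum_f_R0].
    assert (Htail : sum_f_R0 (fun i => potential_density (U (S i))) n
                    <= sum_f_R0 (fun k => potential_density (bias_floor + INR k * delta)) n).
    { apply (IH (fun i => U (S i))); [| exact Hn].
      intros d d' Hd Hd'. pose proof (HU (S d) (S d') ltac:(lia) ltac:(lia)).
      rewrite !S_INR in *. lra. }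
    assert (Hhead : potential_density (U 0%nat)
                    <= potential_density (bias_floor + INR (S n) * delta)).
    { pose proof (HU 0%nat (S n) ltac:(lia) ltac:(lia)). pose proof (pos_INR (S n)).
      simpl (INR 0) in *. apply potential_density_antitone; nra. }
    lra.
Qed.

Section LatticeBound.
Variable bt : R.
Hypothesis bt_gt_1 : 1 < bt.
Hypothesis delta_eq : delta = lam * ln bt.

Definition privacy_cost : R := (2 * bt - 1) / (bt - 1) / lam.

(* [delta = lam ln bt] makes the density decay by the factor [bt] per level. *)
Lemma potential_density_lattice j :
  potential_density (bias_floor + INR (S j) * delta) = (/ bt) ^ j / lam.
Proof.
  unfold potential_density, bias_floor. rewrite S_INR. pose proof (pos_INR j).
  destruct Rle_dec; [| nra].
  destruct (Rle_dec (theta - delta + (INR j + 1) * delta) theta) as [Hle | Hgt].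
  - assert (j = 0%nat) as ->.
    { destruct j; [reflexivity |]. rewrite S_INR in Hle. pose proof (pos_INR j). nra. }
    simpl. lra.
  - replace ((theta - (theta - delta + (INR j + 1) * delta)) / lam) with (- (INR j * ln bt))
      by (rewrite delta_eq; field; lra).
    rewrite exp_Ropp. change (exp (INR j * ln bt)) with (Rpower bt (INR j)).
    rewrite Rpower_pow, pow_inv by lra. reflexivity.
Qed.

Lemma density_lattice_sum_le n :
  sum_f_R0 (fun k => potential_density (bias_floor + INR k * delta)) n <= privacy_cost.
Proof.
  assert (Hq : 0 < / bt < 1).
  { split; [apply Rinv_0_lt_compat; lra |]. rewrite <- Rinv_1. apply Rinv_lt_contravar; lra. }
  assert (Hgeom : 0 < / (1 - / bt)) by (apply Rinv_0_lt_compat; lra).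
  assert (Hlam : 0 < / lam) by (apply Rinv_0_lt_compat; lra).
  assert (Hfloor : potential_density bias_floor = / lam).
  { unfold potential_density, bias_floor.
    destruct (Rle_dec (theta - delta) (theta - delta)), (Rle_dec (theta - delta) theta); lra. }
  assert (Hcost : privacy_cost = / lam + / (1 - / bt) * / lam)
    by (unfold privacy_cost; field; repeat split; lra).
  rewrite Hcost. destruct n as [| m].
  - simpl. rewrite Rmult_0_l, Rplus_0_r, Hfloor. nra.
  - rewrite decomp_sum by lia. cbn [Init.Nat.pred]. simpl (INR 0).
    rewrite Rmult_0_l, Rplus_0_r, Hfloor. apply Rplus_le_compat_l.
    rewrite (sum_eq _ (fun j => (/ bt) ^ j * / lam)) by (intros; apply potential_density_lattice).
    rewrite <- scal_sum, Rmult_comm. apply Rmult_le_compat_r; [lra |].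
    apply geometric_sum_le. lra.
Qed.

Lemma density_sum_le (U : nat -> R) n : separated U n ->
  sum_f_R0 (fun d => potential_density (U d)) n <= privacy_cost.
Proof.
  induction n as [| n IH]; intros HU.
  - destruct (Rle_dec bias_floor (U 0%nat)) as [H0 | H0].
    + eapply Rle_trans; [now apply density_sum_le_lattice | apply density_lattice_sum_le].
    + pose proof (density_lattice_sum_le 0). simpl in *.
      pose proof (potential_density_nonneg (bias_floor + 0 * delta)).
      rewrite potential_density_below_floor by lra. lra.
  - destruct (Rle_dec bias_floor (U (S n))) as [Hn | Hn].
    + eapply Rle_trans; [now apply density_sum_le_lattice | apply density_lattice_sum_le].
    + simpl. rewrite potential_density_below_floor, Rplus_0_r by lra.
      apply IH. intros d d' Hd Hd'. apply HU; lia.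
Qed.

(* [potential_jump u] is the average of [potential_density (u + s)] over
   [s] in [[0, 1]], and every shift of a separated family is separated. *)
Lemma potential_jump_sum_le (U : nat -> R) n : separated U n ->
  sum_f_R0 (fun d => potential_jump (U d)) n <= privacy_cost.
Proof.
  intros HU.
  pose proof (is_RInt_const_R 0 1 privacy_cost) as Hcost.
  replace privacy_cost with ((1 - 0) * privacy_cost) by ring.
  apply (is_RInt_le _ _ 0 1 _ _ Rle_0_1 (is_RInt_sum_potential_jump U n) Hcost).
  intros s Hs. apply density_sum_le.
  intros d d' Hd Hd'. pose proof (HU d d' Hd Hd'). lra.
Qed.

End LatticeBound.

End ClippedPotential.

End LaplaceTail.
Local Open Scope nat_scope.

Lemma list_max_le_sum l : list_max l <= list_sum l.
Proof. induction l; simpl; lia. Qed.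

Lemma sum_minus_max_add {A} (l : list A) (h e : A -> nat) :
  list_sum (map e l) <= 1 ->
  let he := fun y => h y + e y in
  list_sum (map h l) - list_max (map h l) <= list_sum (map he l) - list_max (map he l)
  <= list_sum (map h l) - list_max (map h l) + 1.
Proof.
  intros He he.
  assert (list_sum (map he l) = list_sum (map h l) + list_sum (map e l) /\
          list_max (map h l) <= list_max (map he l) <= list_max (map h l) + list_sum (map e l))
    as [Hsum Hmax].
  { unfold he. clear He. induction l; simpl; lia. }
  pose proof (list_max_le_sum (map h l)). pose proof (list_max_le_sum (map he l)). lia.
Qed.

Lemma sum_minus_max_monotone {A} (l : list A) (h1 h2 : A -> nat) :
  (forall y, In y l -> h2 y <= h1 y) ->
  list_sum (map h2 l) - list_max (map h2 l) <= list_sum (map h1 l) - list_max (map h1 l).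
Proof.
  intros H.
  enough (list_max (map h2 l) <= list_max (map h1 l) /\
          list_sum (map h2 l) <= list_sum (map h1 l) /\
          list_sum (map h2 l) - list_max (map h2 l) <= list_sum (map h1 l) - list_max (map h1 l))
    by tauto.
  induction l as [| y l IH]; simpl; [lia |].
  specialize (IH (fun z Hz => H z (or_intror Hz))). specialize (H y (or_introl eq_refl)).
  pose proof (list_max_le_sum (map h1 l)). pose proof (list_max_le_sum (map h2 l)). lia.
Qed.

Lemma length_filter_monotone {A} (f g : A -> bool) l :
  (forall x, f x = true -> g x = true) -> length (filter f l) <= length (filter g l).
Proof.
  intros H. induction l as [| x l IH]; simpl; [lia |].
  destruct (f x) eqn:Hf; [rewrite (H x Hf); simpl; lia |]. destruct (g x); simpl; lia.
Qed.

Lemma Permutation_filter {A} (f : A -> bool) l l' :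
  Permutation l l' -> Permutation (filter f l) (filter f l').
Proof.
  induction 1; simpl; try destruct (f x); try destruct (f y); eauto using Permutation.
Qed.

Section Positions.
Variable I : Type.
Variable eqI : forall a b : I, {a = b} + {a <> b}.
Variable enumI : list I.

Definition position : Type := option I * list I.

Definition pos_hist (P : list position) (w : node I) (x : option I) : nat :=
  length (filter (fun pr => (sym_eqb I eqI (fst pr) x && ctx_match I eqI w (snd pr))%bool) P).

Definition pos_score (P : list position) (w : node I) : nat :=
  list_sum (map (pos_hist P w) (symbols I enumI)) - list_max (map (pos_hist P w) (symbols I enumI)).

Definition dataset_positions (D : dataset I) : list position := flat_map (positions I) D.

Lemma score_dataset_positions D w : score I eqI enumI D w = pos_score (dataset_positions D) w.
Proof.
  assert (Hhist : forall x, hist I eqI D w x = pos_hist (dataset_positions D) w x).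
  { intros x. unfold hist, pos_hist, dataset_positions. induction D as [| s D IH]; [reflexivity |].
    simpl. now rewrite IH, filter_app, length_app. }
  unfold score, pos_score. now rewrite (map_ext _ _ Hhist).
Qed.

Lemma pos_score_perm P P' w : Permutation P P' -> pos_score P w = pos_score P' w.
Proof.
  intros HP. unfold pos_score, pos_hist.
  erewrite (map_ext (fun x => length (filter _ P))); [reflexivity |].
  intros x. now apply Permutation_length, Permutation_filter.
Qed.

Lemma length_positions s : length (positions I s) = Defs.seq_length I s.
Proof.
  assert (Haux : forall pre b, length (pos_aux I pre b) = length b).
  { intros pre b. revert pre. induction b; intros; simpl; auto. }
  unfold positions, Defs.seq_length. rewrite length_app, Haux. now destruct (term I s).
Qed.

Lemma suffixb_spec u p : suffixb I eqI u p = true <-> exists e, p = e ++ u.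
Proof.
  unfold suffixb. split.
  - intros [_ Hu]%andb_prop.
    destruct (list_eq_dec eqI u (skipn (length p - length u) p)) as [E |]; [| discriminate].
    exists (firstn (length p - length u) p). rewrite E at 2. symmetry. apply firstn_skipn.
  - intros [e ->].
    rewrite length_app, Nat.add_sub, skipn_app, skipn_all, Nat.sub_diag; cbn [app skipn].
    destruct (list_eq_dec eqI u u); [| congruence].
    apply andb_true_intro. split; [apply Nat.leb_le; lia | reflexivity].
Qed.

Lemma count_matching_symbols x : NoDup enumI ->
  list_sum (map (fun y => if sym_eqb I eqI x y then 1 else 0) (symbols I enumI)) <= 1.
Proof.
  intros ND. unfold symbols. cbn [map list_sum fold_right]. rewrite map_map.
  destruct x as [a |]; simpl.
  - induction enumI as [| b l IH]; simpl; [lia |]. apply NoDup_cons_iff in ND as [Hb ND].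
    destruct (eqI a b) as [-> | Hab]; [| now apply IH].
    enough (list_sum (map (fun y => if (if eqI b y then true else false) then 1 else 0) l) = 0)
      by (unfold list_sum in *; simpl; lia).
    clear IH ND. induction l as [| c l IH']; simpl; [reflexivity |].
    destruct (eqI b c) as [-> | _]; [now destruct Hb; left |].
    apply IH'. intros Hc. now apply Hb; right.
  - clear ND. induction enumI; simpl in *; lia.
Qed.

Lemma pos_hist_cons x0 p P w y :
  pos_hist ((x0, p) :: P) w y
  = pos_hist P w y + (if (sym_eqb I eqI x0 y && ctx_match I eqI w p)%bool then 1 else 0).
Proof. unfold pos_hist. simpl. destruct (_ && _)%bool; simpl; lia. Qed.

Lemma pos_score_cons_unmatched x0 p P w :
  ctx_match I eqI w p = false -> pos_score ((x0, p) :: P) w = pos_score P w.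
Proof.
  intros Hw. unfold pos_score.
  rewrite (map_ext (pos_hist ((x0, p) :: P) w) (pos_hist P w)); [reflexivity |].
  intros y. rewrite pos_hist_cons, Hw, andb_false_r. lia.
Qed.

Lemma pos_score_cons_matched x0 p P w : NoDup enumI -> ctx_match I eqI w p = true ->
  pos_score P w <= pos_score ((x0, p) :: P) w <= pos_score P w + 1.
Proof.
  intros ND Hw. unfold pos_score.
  rewrite (map_ext (pos_hist ((x0, p) :: P) w)
                   (fun y => pos_hist P w y + (if sym_eqb I eqI x0 y then 1 else 0)))
    by (intros y; now rewrite pos_hist_cons, Hw, andb_true_r).
  apply sum_minus_max_add, count_matching_symbols, ND.
Qed.

Lemma pos_score_antitone P e u :
  pos_score P (mkNode (e ++ u) false) <= pos_score P (mkNode u false).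
Proof.
  apply sum_minus_max_monotone. intros y _. apply length_filter_monotone.
  intros [x c]. unfold ctx_match. simpl.
  intros [-> [e' ->]%suffixb_spec]%andb_prop. simpl.
  apply suffixb_spec. exists (e' ++ e). now rewrite app_assoc.
Qed.

Definition path_node (p : list I) (d : nat) : node I := mkNode (skipn (length p - d) p) false.

Lemma suffixb_path_node p d : suffixb I eqI (nstr I (path_node p d)) p = true.
Proof. apply suffixb_spec. exists (firstn (length p - d) p). symmetry. apply firstn_skipn. Qed.

Lemma depth_path_node p d : d <= length p -> depth I (path_node p d) = d.
Proof. intros Hd. unfold depth, path_node. simpl. rewrite length_skipn. lia. Qed.

Lemma path_node_extends p d d' : d <= d' <= length p ->
  exists e, nstr I (path_node p d') = e ++ nstr I (path_node p d).
Proof.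
  intros Hd. unfold path_node. simpl.
  exists (firstn (d' - d) (skipn (length p - d') p)).
  rewrite <- (firstn_skipn (d' - d) (skipn (length p - d') p)) at 1.
  f_equal. rewrite skipn_skipn. f_equal. lia.
Qed.

Lemma suffix_is_path_node p w : ndollar I w = false -> suffixb I eqI (nstr I w) p = true ->
  w = path_node p (length (nstr I w)) /\ length (nstr I w) <= length p.
Proof.
  intros Hw [e He]%suffixb_spec. destruct w as [u b]. simpl in *. subst b.
  unfold path_node. rewrite He, length_app. split; [| lia]. f_equal.
  rewrite Nat.add_sub, skipn_app, skipn_all, Nat.sub_diag. reflexivity.
Qed.

Section ValidTree.
Variable O : list (node I).
Hypothesis O_valid : valid_tree I enumI O.

Lemma valid_tree_parent y u : In (mkNode (y :: u) false) O -> In (mkNode u false) O.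
Proof. destruct O_valid as [_ [_ [Hpar _]]]. intros Hin. exact (Hpar _ _ Hin eq_refl). Qed.

Lemma valid_tree_split_of_child y u :
  In y enumI -> In (mkNode (y :: u) false) O -> In (mkNode u true) O.
Proof.
  destruct O_valid as [_ [_ [_ Hch]]]. intros Hy Hin.
  destruct (Hch _ (valid_tree_parent y u Hin) eq_refl) as [Hall | Hnone].
  - apply Hall. apply in_or_app. right. now left.
  - exfalso. apply (Hnone (mkNode (y :: u) false)); [| exact Hin].
    apply in_or_app. left. now apply in_map_iff; exists y.
Qed.

Lemma valid_tree_split_of_descendant l u : (forall a, In a enumI) -> l <> [] ->
  In (mkNode (l ++ u) false) O -> In (mkNode u true) O.
Proof.
  intros Hall. induction l as [| y l IH]; intros Hl Hin; [congruence |].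
  destruct l as [| y' l].
  - exact (valid_tree_split_of_child y u (Hall y) Hin).
  - apply IH; [discriminate |]. exact (valid_tree_parent y _ Hin).
Qed.

Lemma valid_tree_unsplit_nested u1 u2 p : (forall a, In a enumI) ->
  In (mkNode u1 false) O -> In (mkNode u2 false) O ->
  ~ In (mkNode u1 true) O -> ~ In (mkNode u2 true) O ->
  suffixb I eqI u1 p = true -> suffixb I eqI u2 p = true -> u1 = u2.
Proof.
  intros Hall H1 H2 N1 N2 [e1 E1]%suffixb_spec [e2 E2]%suffixb_spec.
  rewrite E1 in E2. apply app_eq_app in E2 as [[| y l] [[_ Hl] | [_ Hl]]]; simpl in Hl;
    try (now subst); exfalso.
  - apply N1. apply (valid_tree_split_of_descendant (y :: l) u1 Hall); [discriminate |].
    simpl. now rewrite <- Hl.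
  - apply N2. apply (valid_tree_split_of_descendant (y :: l) u2 Hall); [discriminate |].
    simpl. now rewrite <- Hl.
Qed.

End ValidTree.

End Positions.
Local Open Scope R_scope.

Lemma sum_app (l1 l2 : list R) :
  fold_right Rplus 0 (l1 ++ l2) = fold_right Rplus 0 l1 + fold_right Rplus 0 l2.
Proof. induction l1 as [| a l1 IH]; simpl; [ring | rewrite IH; ring]. Qed.

Lemma sum_map_seq (F : nat -> R) n : fold_right Rplus 0 (map F (seq 0 (S n))) = sum_f_R0 F n.
Proof.
  induction n as [| n IH]; [simpl; ring |].
  rewrite seq_S, map_app, sum_app, IH. simpl. ring.
Qed.

Lemma sum_le_of_support {T} (O L : list T) (r : T -> R) :
  NoDup O -> (forall w, 0 <= r w) -> (forall w, In w O -> r w <> 0 -> In w L) ->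
  fold_right Rplus 0 (map r O) <= fold_right Rplus 0 (map r L).
Proof.
  intros ND Hr. revert L. induction ND as [| a O Ha ND IH]; intros L HL; simpl.
  - clear HL. induction L as [| b L IHL]; simpl; [lra |]. pose proof (Hr b). lra.
  - destruct (Req_dec (r a) 0) as [Hz | Hnz].
    + rewrite Hz, Rplus_0_l. apply IH. intros w Hw. apply HL. now right.
    + destruct (in_split a L (HL a (or_introl eq_refl) Hnz)) as [L1 [L2 ->]].
      rewrite !map_app, !sum_app. simpl.
      enough (Hrest : fold_right Rplus 0 (map r O) <= fold_right Rplus 0 (map r (L1 ++ L2)))
        by (rewrite map_app, sum_app in Hrest; lra).
      apply IH. intros w Hw Hrw.
      destruct (in_app_or _ _ _ (HL w (or_intror Hw) Hrw)) as [H1 | [<- | H2]];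
        [apply in_or_app; now left | contradiction | apply in_or_app; now right].
Qed.

Lemma sum_le_of_unique_support {T} (O : list T) (r : T -> R) c :
  NoDup O -> 0 <= c -> (forall w, 0 <= r w <= c) ->
  (forall w1 w2, In w1 O -> In w2 O -> r w1 <> 0 -> r w2 <> 0 -> w1 = w2) ->
  fold_right Rplus 0 (map r O) <= c.
Proof.
  intros ND Hc Hr Huniq.
  destruct (excluded_middle_informative (exists w0, In w0 O /\ r w0 <> 0))
    as [[w0 [Hw0 Hr0]] | Hnone].
  - eapply Rle_trans; [apply (sum_le_of_support O [w0]); [exact ND | apply Hr |] |].
    + intros w Hw Hrw. left. symmetry. exact (Huniq w w0 Hw Hw0 Hrw Hr0).
    + simpl. rewrite Rplus_0_r. apply Hr.
  - eapply Rle_trans; [apply (sum_le_of_support O []); [exact ND | apply Hr |] | simpl; exact Hc].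
    intros w Hw Hrw. exfalso. apply Hnone. now exists w.
Qed.

Lemma prod_nonneg {T} (O : list T) (a : T -> R) :
  (forall w, In w O -> 0 <= a w) -> 0 <= fold_right Rmult 1 (map a O).
Proof.
  induction O as [| w O IH]; intros H; simpl; [lra |].
  apply Rmult_le_pos; [apply H; now left | apply IH; intros z Hz; apply H; now right].
Qed.

Lemma prod_le_exp_sum_mul {T} (O : list T) (a b r : T -> R) :
  (forall w, In w O -> 0 <= a w /\ 0 <= b w /\ a w <= exp (r w) * b w) ->
  fold_right Rmult 1 (map a O)
  <= exp (fold_right Rplus 0 (map r O)) * fold_right Rmult 1 (map b O).
Proof.
  induction O as [| w O IH]; intros H; simpl; [rewrite exp_0; lra |].
  assert (H' : forall z, In z O -> 0 <= a z /\ 0 <= b z /\ a z <= exp (r z) * b z)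
    by (intros z Hz; apply H; now right).
  destruct (H w (or_introl eq_refl)) as [Ha [Hb Hab]].
  assert (Hprod : 0 <= fold_right Rmult 1 (map a O)) by (apply prod_nonneg; apply H').
  rewrite exp_plus.
  replace (exp (r w) * exp (fold_right Rplus 0 (map r O)) * (b w * fold_right Rmult 1 (map b O)))
    with ((exp (r w) * b w) * (exp (fold_right Rplus 0 (map r O)) * fold_right Rmult 1 (map b O)))
    by ring.
  apply Rmult_le_compat; auto.
Qed.

Section TreeProbability.
Variable I : Type.
Variable eqI : forall a b : I, {a = b} + {a <> b}.
Variable enumI : list I.
Hypothesis alphabet : alphabet_ok I enumI.
Variables lam theta delta bt : R.
Hypothesis lam_pos : 0 < lam.
Hypothesis bt_gt_1 : 1 < bt.
Hypothesis delta_eq : delta = lam * ln bt.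

Lemma delta_pos : 0 < delta.
Proof.
  rewrite delta_eq. apply Rmult_lt_0_compat; [lra |]. rewrite <- ln_1. apply ln_increasing; lra.
Qed.

Definition pos_bias (P : list (position I)) (w : node I) : R :=
  Rmax (theta - delta) (INR (pos_score I eqI enumI P w) - INR (depth I w) * delta).

Definition pos_node_factor (P : list (position I)) (O : list (node I)) (w : node I) : R :=
  if ndollar I w then 1
  else if in_dec (node_eq_dec I eqI) (mkNode (nstr I w) true) O
       then split_prob lam theta (pos_bias P w)
       else 1 - split_prob lam theta (pos_bias P w).

Definition pos_tree_prob (P : list (position I)) (O : list (node I)) : R :=
  fold_right Rmult 1 (map (pos_node_factor P O) O).

Lemma privtree_prob_positions D O :
  privtree_prob I eqI enumI D lam theta delta O
  = if excluded_middle_informative (valid_tree I enumI O)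
    then pos_tree_prob (dataset_positions I D) O else 0.
Proof.
  unfold privtree_prob. destruct excluded_middle_informative; [| reflexivity].
  unfold pos_tree_prob. f_equal. apply map_ext. intros w.
  unfold node_factor, pos_node_factor, p_split, bval, pos_bias, split_prob.
  now rewrite score_dataset_positions.
Qed.

Lemma pos_tree_prob_perm P P' O : Permutation P P' -> pos_tree_prob P O = pos_tree_prob P' O.
Proof.
  intros HP. unfold pos_tree_prob. f_equal. apply map_ext. intros w.
  unfold pos_node_factor, pos_bias. now rewrite (pos_score_perm I eqI enumI P P' w HP).
Qed.

Lemma pos_node_factor_nonneg P O w : 0 <= pos_node_factor P O w.
Proof.
  unfold pos_node_factor. pose proof (split_prob_bounds lam theta lam_pos (pos_bias P w)).
  destruct (ndollar I w); [lra |]. destruct in_dec; lra.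
Qed.

Lemma pos_tree_prob_nonneg P O : 0 <= pos_tree_prob P O.
Proof. apply prod_nonneg. intros w _. apply pos_node_factor_nonneg. Qed.

Lemma pos_bias_cons x0 p P w : ndollar I w = false ->
  if suffixb I eqI (nstr I w) p then
    pos_bias P w <= pos_bias ((x0, p) :: P) w
    <= Rmax (theta - delta) (INR (pos_score I eqI enumI P w) - INR (depth I w) * delta + 1)
  else pos_bias ((x0, p) :: P) w = pos_bias P w.
Proof.
  intros Hw. unfold pos_bias.
  assert (Hctx : ctx_match I eqI w p = suffixb I eqI (nstr I w) p)
    by (unfold ctx_match; now rewrite Hw).
  destruct (suffixb I eqI (nstr I w) p).
  - destruct (pos_score_cons_matched I eqI enumI x0 p P w (proj1 alphabet) Hctx) as [H1 H2].
    apply le_INR in H1, H2. rewrite plus_INR in H2. simpl (INR 1) in H2.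
    split; apply Rle_max_compat_l; lra.
  - now rewrite pos_score_cons_unmatched.
Qed.

Definition insertion_cost (p : list I) (P : list (position I)) (w : node I) : R :=
  if ndollar I w then 0
  else if suffixb I eqI (nstr I w) p
       then potential_jump lam theta delta
              (INR (pos_score I eqI enumI P w) - INR (depth I w) * delta)
       else 0.

Lemma insertion_cost_ge0 p P w : 0 <= insertion_cost p P w.
Proof.
  unfold insertion_cost. destruct ndollar; [lra |]. destruct suffixb; [| lra].
  now apply potential_jump_ge0.
Qed.

Lemma pos_node_factor_insert_le x0 p P O w :
  pos_node_factor ((x0, p) :: P) O w <= exp (insertion_cost p P w) * pos_node_factor P O w.
Proof.
  unfold pos_node_factor, insertion_cost.
  destruct (ndollar I w) eqn:Hw; [rewrite exp_0; lra |].
  pose proof (pos_bias_cons x0 p P w Hw) as Hb.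
  destruct (suffixb I eqI (nstr I w) p); [| rewrite Hb, exp_0; lra].
  set (u := INR (pos_score I eqI enumI P w) - INR (depth I w) * delta) in *.
  destruct Hb as [Hb1 Hb2].
  pose proof (split_prob_bounds lam theta lam_pos (pos_bias P w)).
  assert (Hjump : split_potential lam theta (pos_bias ((x0, p) :: P) w)
                  - split_potential lam theta (pos_bias P w)
                  <= potential_jump lam theta delta u).
  { assert (Hu : pos_bias P w = Rmax (theta - delta) u) by reflexivity.
    pose proof (split_potential_monotone lam theta lam_pos _ _ Hb2).
    unfold potential_jump, clipped_potential, bias_floor. rewrite Hu. lra. }
  destruct in_dec.
  - eapply Rle_trans; [apply (split_prob_ratio lam theta lam_pos _ _ Hb1) |].
    apply Rmult_le_compat_r; [lra |]. now apply exp_le_exp.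
  - pose proof (split_prob_monotone lam theta lam_pos _ _ Hb1).
    pose proof (exp_le_exp _ _ (potential_jump_ge0 lam theta lam_pos delta u)) as Hexp.
    rewrite exp_0 in Hexp. nra.
Qed.

Definition removal_cost (p : list I) (O : list (node I)) (w : node I) : R :=
  if ndollar I w then 0
  else if suffixb I eqI (nstr I w) p
       then if in_dec (node_eq_dec I eqI) (mkNode (nstr I w) true) O then 0 else / lam
       else 0.

Lemma pos_node_factor_remove_le x0 p P O w :
  pos_node_factor P O w <= exp (removal_cost p O w) * pos_node_factor ((x0, p) :: P) O w.
Proof.
  unfold pos_node_factor, removal_cost.
  destruct (ndollar I w) eqn:Hw; [rewrite exp_0; lra |].
  pose proof (pos_bias_cons x0 p P w Hw) as Hb.
  destruct (suffixb I eqI (nstr I w) p); [| rewrite Hb, exp_0; lra].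
  assert (Hgap : pos_bias ((x0, p) :: P) w - pos_bias P w <= 1).
  { unfold pos_bias in *. unfold Rmax in *. repeat destruct Rle_dec; lra. }
  destruct Hb as [Hb1 _].
  pose proof (split_prob_bounds lam theta lam_pos (pos_bias ((x0, p) :: P) w)).
  destruct in_dec.
  - rewrite exp_0. pose proof (split_prob_monotone lam theta lam_pos _ _ Hb1). lra.
  - eapply Rle_trans; [apply (nosplit_prob_ratio lam theta lam_pos _ _ Hb1) |].
    apply Rmult_le_compat_r; [lra |]. apply exp_le_exp.
    replace (/ lam) with (1 / lam) by (field; lra). apply Rdiv_le_compat_r; lra.
Qed.

Lemma insertion_cost_path_node p P d : (d <= length p)%nat ->
  insertion_cost p P (path_node I p d)
  = potential_jump lam theta delta
      (INR (pos_score I eqI enumI P (path_node I p d)) - INR d * delta).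
Proof.
  intros Hd. unfold insertion_cost.
  now rewrite suffixb_path_node, depth_path_node by exact Hd.
Qed.

Lemma path_biases_separated p P :
  separated delta (fun d => INR (pos_score I eqI enumI P (path_node I p d)) - INR d * delta)
            (length p).
Proof.
  intros d d' Hdd' Hd'.
  destruct (path_node_extends I p d d' ltac:(lia)) as [e He].
  pose proof (pos_score_antitone I eqI enumI P e (nstr I (path_node I p d))) as Hanti.
  rewrite <- He in Hanti. apply le_INR in Hanti. unfold path_node in *. simpl in Hanti. lra.
Qed.

Lemma insertion_cost_sum_le p P O : NoDup O ->
  fold_right Rplus 0 (map (insertion_cost p P) O) <= privacy_cost lam bt.
Proof.
  intros ND. eapply Rle_trans.
  - apply (sum_le_of_support O (map (path_node I p) (seq 0 (S (length p)))));
      auto using insertion_cost_ge0.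
    intros w _ Hw. unfold insertion_cost in Hw.
    destruct (ndollar I w) eqn:Hd; [lra |]. destruct suffixb eqn:Hs; [| lra].
    destruct (suffix_is_path_node I eqI p w Hd Hs) as [Hpath Hlen].
    apply in_map_iff. exists (length (nstr I w)). split; [now symmetry | apply in_seq; lia].
  - rewrite map_map, sum_map_seq, (sum_eq _ _ _ (fun d Hd => insertion_cost_path_node p P d Hd)).
    apply (potential_jump_sum_le lam theta lam_pos delta delta_pos bt bt_gt_1 delta_eq).
    apply path_biases_separated.
Qed.

Lemma removal_cost_sum_le p O : valid_tree I enumI O ->
  fold_right Rplus 0 (map (removal_cost p O) O) <= / lam.
Proof.
  intros HO. pose proof (Rinv_0_lt_compat lam lam_pos).
  apply sum_le_of_unique_support; [apply (proj1 HO) | lra | |].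
  - intros w. unfold removal_cost. destruct (ndollar I w); [lra |].
    destruct (suffixb I eqI (nstr I w) p); [destruct in_dec |]; lra.
  - intros [u1 b1] [u2 b2] H1 H2 N1 N2. unfold removal_cost in N1, N2. simpl in *.
    destruct b1; [lra |]. destruct b2; [lra |].
    destruct (suffixb I eqI u1 p) eqn:S1; [| lra]. destruct (suffixb I eqI u2 p) eqn:S2; [| lra].
    destruct in_dec as [| Q1]; [lra |]. destruct in_dec as [| Q2]; [lra |].
    f_equal. exact (valid_tree_unsplit_nested I eqI enumI O HO u1 u2 p (proj2 alphabet)
                                              H1 H2 Q1 Q2 S1 S2).
Qed.

Lemma privacy_cost_ge_inv_lam : / lam <= privacy_cost lam bt.
Proof.
  unfold privacy_cost. apply (Rmult_le_reg_r lam); [exact lam_pos |].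
  replace (/ lam * lam) with 1 by (field; lra).
  replace ((2 * bt - 1) / (bt - 1) / lam * lam) with (1 + bt / (bt - 1)) by (field; lra).
  assert (0 < bt / (bt - 1)) by (apply Rdiv_lt_0_compat; lra). lra.
Qed.

Lemma insert_position_le x0 p P O : NoDup O ->
  pos_tree_prob ((x0, p) :: P) O <= exp (privacy_cost lam bt) * pos_tree_prob P O.
Proof.
  intros ND. eapply Rle_trans.
  - apply (prod_le_exp_sum_mul O (pos_node_factor ((x0, p) :: P) O) (pos_node_factor P O)
                                 (insertion_cost p P)).
    intros w _.
    split; [| split]; auto using pos_node_factor_nonneg, pos_node_factor_insert_le.
  - apply Rmult_le_compat_r; [apply pos_tree_prob_nonneg |].
    now apply exp_le_exp, insertion_cost_sum_le.
Qed.

Lemma remove_position_le x0 p P O : valid_tree I enumI O ->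
  pos_tree_prob P O <= exp (privacy_cost lam bt) * pos_tree_prob ((x0, p) :: P) O.
Proof.
  intros HO. eapply Rle_trans.
  - apply (prod_le_exp_sum_mul O (pos_node_factor P O) (pos_node_factor ((x0, p) :: P) O)
                                 (removal_cost p O)).
    intros w _.
    split; [| split]; auto using pos_node_factor_nonneg, pos_node_factor_remove_le.
  - apply Rmult_le_compat_r; [apply pos_tree_prob_nonneg |].
    apply exp_le_exp. pose proof (removal_cost_sum_le p O HO).
    pose proof privacy_cost_ge_inv_lam. lra.
Qed.

Lemma insert_positions_le Q P O : NoDup O ->
  pos_tree_prob (Q ++ P) O <= exp (INR (length Q) * privacy_cost lam bt) * pos_tree_prob P O.
Proof.
  intros ND. induction Q as [| [x0 p] Q IH]; [simpl; rewrite Rmult_0_l, exp_0; lra |].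
  cbn [app length].
  eapply Rle_trans; [now apply insert_position_le |].
  rewrite S_INR, Rmult_plus_distr_r, Rmult_1_l, Rplus_comm, exp_plus, Rmult_assoc.
  apply Rmult_le_compat_l; [left; apply exp_pos | exact IH].
Qed.

Lemma remove_positions_le Q P O : valid_tree I enumI O ->
  pos_tree_prob P O <= exp (INR (length Q) * privacy_cost lam bt) * pos_tree_prob (Q ++ P) O.
Proof.
  intros HO. induction Q as [| [x0 p] Q IH]; [simpl; rewrite Rmult_0_l, exp_0; lra |].
  cbn [app length].
  eapply Rle_trans; [exact IH |].
  rewrite S_INR, Rmult_plus_distr_r, Rmult_1_l, exp_plus, Rmult_assoc.
  apply Rmult_le_compat_l; [left; apply exp_pos | now apply remove_position_le].
Qed.

End TreeProbability.

Section Calibration.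
Variables lam bt eps : R.
Variable ltop : nat.
Hypothesis bt_gt_1 : 1 < bt.
Hypothesis eps_pos : 0 < eps.
Hypothesis ltop_pos : (1 <= ltop)%nat.
Hypothesis lam_calibrated : lam >= (2 * bt - 1) / (bt - 1) * (INR ltop / eps).

Lemma calibrated_lam_pos : 0 < lam.
Proof.
  assert (HK : 0 < (2 * bt - 1) / (bt - 1)) by (apply Rdiv_lt_0_compat; lra).
  assert (Hl : 1 <= INR ltop) by (apply (le_INR 1); exact ltop_pos).
  assert (Hratio : 0 < INR ltop / eps) by (apply Rdiv_lt_0_compat; lra).
  pose proof (Rmult_lt_0_compat _ _ HK Hratio). lra.
Qed.

Lemma privacy_cost_budget n : (n <= ltop)%nat -> INR n * privacy_cost lam bt <= eps.
Proof.
  intros Hn. pose proof calibrated_lam_pos as Hlam.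
  set (K := (2 * bt - 1) / (bt - 1)) in *.
  assert (HK : 0 < K) by (apply Rdiv_lt_0_compat; lra).
  apply le_INR in Hn. pose proof (pos_INR n).
  unfold privacy_cost. fold K. apply (Rmult_le_reg_r lam); [exact Hlam |].
  replace (INR n * (K / lam) * lam) with (K * INR n) by (field; lra).
  assert (K * INR ltop <= eps * lam).
  { pose proof (Rmult_le_compat_l eps _ _ (Rlt_le _ _ eps_pos) (Rge_le _ _ lam_calibrated))
      as Hmul.
    replace (eps * (K * (INR ltop / eps))) with (K * INR ltop) in Hmul by (field; lra).
    lra. }
  nra.
Qed.

End Calibration.

Lemma beta_gt_1 (I : Type) (enumI : list I) : enumI <> nil -> 1 < INR (beta I enumI).
Proof.
  intros Hne. unfold beta. rewrite S_INR. destruct enumI as [| a l]; [congruence |].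
  simpl length. rewrite S_INR. pose proof (pos_INR (length l)). lra.
Qed.

Theorem theorem2 (I : Type) (eqI : forall a b : I, {a = b} + {a <> b})
  (enumI : list I) (ltop : nat) (eps theta lam delta : R) :
  alphabet_ok I enumI ->
  enumI <> nil ->
  (1 <= ltop)%nat ->
  0 < eps ->
  lam >= (2 * INR (beta I enumI) - 1) / (INR (beta I enumI) - 1) * (INR ltop / eps) ->
  delta = lam * ln (INR (beta I enumI)) ->
  forall D D' : dataset I,
    bounded_dataset I ltop D -> bounded_dataset I ltop D' ->
    neighboring I ltop D D' ->
    forall O : list (node I),
      privtree_prob I eqI enumI D lam theta delta O
        <= exp eps * privtree_prob I eqI enumI D' lam theta delta O.
Proof.
  intros Halph Hne Hltop Heps Hlam Hdelta D D' _ _ Hnb O.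
  pose proof (beta_gt_1 I enumI Hne) as Hbt.
  pose proof (calibrated_lam_pos _ _ _ _ Hbt Heps Hltop Hlam) as Hlam_pos.
  assert (Hbudget : forall s : sequence I, (Defs.seq_length I s <= ltop)%nat ->
            exp (INR (length (positions I s)) * privacy_cost lam (INR (beta I enumI))) <= exp eps).
  { intros s Hs. apply exp_le_exp, (privacy_cost_budget _ _ _ ltop); auto.
    now rewrite length_positions. }
  rewrite !privtree_prob_positions. unfold dataset_positions.
  destruct excluded_middle_informative as [HO | _]; [| lra].
  destruct Hnb as [[s [Hs HP]] | [s [Hs HP]]];
    apply (Permutation_flat_map (positions I)) in HP;
    rewrite (pos_tree_prob_perm I eqI enumI lam theta delta _ _ O HP).
  - eapply Rle_trans; [apply (remove_positions_le I eqI enumI Halph); eassumption |].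
    apply Rmult_le_compat_r; [apply pos_tree_prob_nonneg; exact Hlam_pos | now apply Hbudget].
  - eapply Rle_trans; [apply (insert_positions_le I eqI enumI Halph); try eassumption; apply HO |].
    apply Rmult_le_compat_r; [apply pos_tree_prob_nonneg; exact Hlam_pos | now apply Hbudget].
Qed.
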